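(* $\mathrm{HS}_{\mathsf{lin}}$ is at least exponentially more succinct than $\mathrm{LTL}$: there is a family of $\mathrm{HS}$ formulas $(\psi_n)_{n\ge1}$ such that, for every $n$, no $\mathrm{LTL}$ formula equivalent to $\psi_n$ (equivalence meaning: for every finite Kripke structure $K$, $K\models_{\mathsf{lin}}\psi_n$ iff $K\models\varphi$) has size bounded by a polynomial in $|\psi_n|$.
   Context: A Kripke structure over a finite set $\mathcal{AP}$ of proposition letters is $K=(\mathcal{AP},S,\delta,\mu,s_0)$ with state set $S$, left-total transition relation $\delta\subseteq S\times S$, labelling $\mu:S\to 2^{\mathcal{AP}}$, initial state $s_0$; $K$ is finite if $S$ is finite. An infinite path is an infinite sequence $\pi$ of states with $(\pi(i),\pi(i+1))\in\delta$; it is initial if $\pi(0)=s_0$. The size $|\varphi|$ of a formula is its number of symbols/subformulas. $\mathrm{HS}$ formulas: $\psi::=p\mid\neg\psi\mid\psi\wedge\psi\mid\langle X\rangle\psi$, $X$ ranging over the Allen relations $A,L,B,E,D,O$ and their inverses $\bar A,\dots,\bar O$; $[X]\psi:=\neg\langle X\rangle\neg\psi$. Under the non-strict semantics all modalities are definable from $\langle B\rangle,\langle E\rangle,\langle\bar B\rangle,\langle\bar E\rangle$. Trace-based semantics: for an infinite path $\pi$, intervals are $[i,j]$ with $0\le i\le j$; $[i,j]\models p$ iff $p\in\mu(\pi(h))$ for all $i\le h\le j$; $[x,y]\models\langle B\rangle\psi$ iff $[x,z]\models\psi$ for some $x\le z<y$; $[x,y]\models\langle E\rangle\psi$ iff $[v,y]\models\psi$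 for some $x<v\le y$; $[x,y]\models\langle\bar B\rangle\psi$ iff $[x,z]\models\psi$ for some $z>y$; $[x,y]\models\langle\bar E\rangle\psi$ iff $[v,y]\models\psi$ for some $v<x$. $K\models_{\mathsf{lin}}\psi$ iff for every initial infinite path $\pi$ and every $i\ge0$, $[0,i]\models\psi$ in $\pi$; $\mathrm{HS}_{\mathsf{lin}}$ is $\mathrm{HS}$ under this semantics. $\mathrm{LTL}$: $\varphi::=\top\mid p\mid\neg\varphi\mid\varphi\wedge\varphi\mid\mathsf X\varphi\mid\varphi\,\mathsf U\,\varphi$ with the standard semantics over infinite paths; $K\models\varphi$ iff $\pi,0\models\varphi$ for every initial infinite path $\pi$. *)

From mathcomp Require Import all_boot.
Set Implicit Arguments. Unset Strict Implicit. Unset Printing Implicit Defensive.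

Definition prop_letter := nat.

Record kripke := Kripke {
  kstate : finType;
  kdelta : kstate -> kstate -> Prop;
  kmu : kstate -> prop_letter -> bool;
  ks0 : kstate }.

Definition left_total (K : kripke) : Prop :=
  forall s : kstate K, exists s' : kstate K, kdelta s s'.

Definition is_path (K : kripke) (pi : nat -> kstate K) : Prop :=
  forall i, kdelta (pi i) (pi i.+1).

Definition is_initial_path (K : kripke) (pi : nat -> kstate K) : Prop :=
  is_path pi /\ pi 0 = ks0 K.

Inductive allen := rA | rL | rB | rE | rD | rO
                 | rAbar | rLbar | rBbar | rEbar | rDbar | rObar.

Inductive hs :=
| HProp : prop_letter -> hs
| HNot : hs -> hs
| HAnd : hs -> hs -> hs
| HDia : allen -> hs -> hs.

Fixpoint hs_size (f : hs) : nat :=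
  match f with
  | HProp _ => 1
  | HNot g => (hs_size g).+1
  | HAnd g h => (hs_size g + hs_size h).+1
  | HDia _ g => (hs_size g).+1
  end.

(* Non-strict Allen relations: [x,y] R [w,z], intervals [i,j] with i <= j. *)
Definition allen_rel (X : allen) (x y w z : nat) : Prop :=
  match X with
  | rA    => w = y /\ y <= z
  | rAbar => z = x /\ w <= x
  | rL    => y < w /\ w <= z
  | rLbar => w <= z /\ z < x
  | rB    => w = x /\ x <= z /\ z < y
  | rBbar => w = x /\ y < z
  | rE    => z = y /\ x < w /\ w <= y
  | rEbar => z = y /\ w < x
  | rD    => x < w /\ w <= z /\ z < y
  | rDbar => w < x /\ y < z
  | rO    => x < w /\ w <= y /\ y < z
  | rObar => w < x /\ x <= z /\ z < y
  end.

Fixpoint hs_sat (K : kripke) (pi : nat -> kstate K) (f : hs) (x y : nat) : Prop :=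
  match f with
  | HProp p => forall h, x <= h <= y -> kmu (pi h) p
  | HNot g => ~ hs_sat pi g x y
  | HAnd g h => hs_sat pi g x y /\ hs_sat pi h x y
  | HDia X g => exists w z, w <= z /\ allen_rel X x y w z /\ hs_sat pi g w z
  end.

Definition hs_lin_models (K : kripke) (f : hs) : Prop :=
  forall pi : nat -> kstate K, is_initial_path pi -> forall i, hs_sat pi f 0 i.

Inductive ltl :=
| LTop : ltl
| LProp : prop_letter -> ltl
| LNot : ltl -> ltl
| LAnd : ltl -> ltl -> ltl
| LNext : ltl -> ltl
| LUntil : ltl -> ltl -> ltl.

Fixpoint ltl_size (f : ltl) : nat :=
  match f with
  | LTop => 1
  | LProp _ => 1
  | LNot g => (ltl_size g).+1
  | LAnd g h => (ltl_size g + ltl_size h).+1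
  | LNext g => (ltl_size g).+1
  | LUntil g h => (ltl_size g + ltl_size h).+1
  end.

Fixpoint ltl_sat (K : kripke) (pi : nat -> kstate K) (f : ltl) (i : nat) : Prop :=
  match f with
  | LTop => True
  | LProp p => kmu (pi i) p
  | LNot g => ~ ltl_sat pi g i
  | LAnd g h => ltl_sat pi g i /\ ltl_sat pi h i
  | LNext g => ltl_sat pi g i.+1
  | LUntil g h => exists j, i <= j /\ ltl_sat pi h j /\
                    forall k, i <= k < j -> ltl_sat pi g k
  end.

Definition ltl_models (K : kripke) (f : ltl) : Prop :=
  forall pi : nat -> kstate K, is_initial_path pi -> ltl_sat pi f 0.

Definition hs_ltl_equiv (psi : hs) (phi : ltl) : Prop :=
  forall K : kripke, left_total K -> (hs_lin_models K psi <-> ltl_models K phi).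

From mathcomp Require Import all_boot.
From mathcomp Require Import boolp.
From mathcomp Require Import zify.
Set Implicit Arguments. Unset Strict Implicit. Unset Printing Implicit Defensive.

(* The structure with the single path  a, s_1, ..., s_m, sink, sink, ...,  where
   a and the s_j are valuations of p_0, ..., p_(n-1) (p_n being false at a and
   true at every s_j), satisfies psi n iff a is one of the s_j.  The truth of an
   LTL formula phi at position 0 depends only on the label there and on the
   truth values at position 1 of the |phi| subformulas of phi, which do not
   depend on a.  Hence an LTL formula equivalent to psi n encodes every set
   {s_1, ..., s_m} in |phi| bits: 2^(2^n) <= 2^|phi|, while |psi n| = 48 n + 27. *)

Definition shift (K : kripke) (pi : nat -> kstate K) : nat -> kstate K :=
  fun i => pi i.+1.

Lemma ltl_sat_shift K (pi : nat -> kstate K) f i :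
  ltl_sat (shift pi) f i <-> ltl_sat pi f i.+1.
Proof.
elim: f i => [|p|g IH|g IHg h IHh|g IH|g IHg h IHh] i //=.
- exact: (iff_not2 _ _).2 (IH i).
- by rewrite IHg IHh.
- split=> -[j [le_ij [Hh Hg]]].
  + exists j.+1; split=> //; split; first exact/IHh.
    by case=> [|k] /andP[? ?] //; apply/IHg/Hg; lia.
  + case: j le_ij Hh Hg => [|j] le_ij Hh Hg; first by [].
    exists j; split=> //; split; first exact/IHh.
    by move=> k /andP[? ?]; apply/IHg/Hg; lia.
Qed.

Lemma ltl_sat_until K (pi : nat -> kstate K) g h i :
  ltl_sat pi (LUntil g h) i <->
  ltl_sat pi h i \/ ltl_sat pi g i /\ ltl_sat pi (LUntil g h) i.+1.
Proof.
split=> [[j [le_ij [Hh Hg]]]|[Hh|[Hg [j [lt_ij [Hh Hg']]]]]].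
- have [<-|ne_ji] := eqVneq j i; first by left.
  right; split; first by apply: Hg; lia.
  by exists j; split; [lia | split=> // k ?; apply: Hg; lia].
- by exists i; split=> //; split=> // k; lia.
- exists j; split; first lia.
  split=> // k /andP[le_ik lt_kj].
  have [<- //|ne_ik] := eqVneq i k.
  by apply: Hg'; lia.
Qed.

Lemma eq_ltl_sat (K1 K2 : kripke) (pi1 : nat -> kstate K1) (pi2 : nat -> kstate K2) :
  (forall i, kmu (pi1 i) =1 kmu (pi2 i)) ->
  forall f i, ltl_sat pi1 f i <-> ltl_sat pi2 f i.
Proof.
move=> eq_mu; elim=> [|p|g IH|g IHg h IHh|g IH|g IHg h IHh] i //=.
- by rewrite eq_mu.
- by rewrite IH.
- by rewrite IHg IHh.
- split=> -[j [le_ij [Hh Hg]]]; exists j; split=> //; split; try exact/IHh;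
    by move=> k /Hg /IHg.
Qed.

Fixpoint ltl_sub (f : ltl) : seq ltl :=
  f :: match f with
       | LNot g | LNext g => ltl_sub g
       | LAnd g h | LUntil g h => ltl_sub g ++ ltl_sub h
       | _ => [::]
       end.

Lemma size_ltl_sub f : size (ltl_sub f) = ltl_size f.
Proof.
by elim: f => [|p|g IH|g IHg h IHh|g IH|g IHg h IHh] //=; rewrite ?size_cat ?IH ?IHg ?IHh.
Qed.

Definition ltl_truths K (pi : nat -> kstate K) (f : ltl) : seq bool :=
  [seq `[< ltl_sat pi g 0 >] | g <- ltl_sub f].

Lemma size_ltl_truths K (pi : nat -> kstate K) f : size (ltl_truths pi f) = ltl_size f.
Proof. by rewrite size_map size_ltl_sub. Qed.

Lemma ltl_truths_head (K1 K2 : kripke) (pi1 : nat -> kstate K1) (pi2 : nat -> kstate K2) f :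
  ltl_truths pi1 f = ltl_truths pi2 f -> (ltl_sat pi1 f 0 <-> ltl_sat pi2 f 0).
Proof.
by move/(congr1 (head true)); case: f => [|p|g|g h|g|g h]; exact: asbool_eq_equiv.
Qed.

Lemma ltl_truths_cat (K1 K2 : kripke) (pi1 : nat -> kstate K1) (pi2 : nat -> kstate K2) g h :
  [seq `[< ltl_sat pi1 f 0 >] | f <- ltl_sub g ++ ltl_sub h] =
  [seq `[< ltl_sat pi2 f 0 >] | f <- ltl_sub g ++ ltl_sub h] ->
  ltl_truths pi1 g = ltl_truths pi2 g /\ ltl_truths pi1 h = ltl_truths pi2 h.
Proof.
by rewrite !map_cat => /eqP; rewrite eqseq_cat ?size_ltl_truths // => /andP[/eqP ? /eqP ?].
Qed.

Lemma ltl_sat0_truths (K1 K2 : kripke) (pi1 : nat -> kstate K1) (pi2 : nat -> kstate K2) f :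
  kmu (pi1 0) =1 kmu (pi2 0) ->
  ltl_truths (shift pi1) f = ltl_truths (shift pi2) f ->
  ltl_sat pi1 f 0 <-> ltl_sat pi2 f 0.
Proof.
move=> eq_mu0; elim: f => [|p|g IH|g IHg h IHh|g IH|g IHg h IHh].
- by [].
- by rewrite /= eq_mu0.
- by case=> _ /IH ?; exact: (iff_not2 _ _).2.
- by case=> _ /ltl_truths_cat[/IHg Hg /IHh Hh] /=; rewrite Hg Hh.
- by case=> _ /ltl_truths_head; rewrite /= !ltl_sat_shift.
- case=> Hu /ltl_truths_cat[/IHg Hg /IHh Hh].
  have {}Hu : ltl_sat (shift pi1) (LUntil g h) 0 <-> ltl_sat (shift pi2) (LUntil g h) 0.
    exact: asbool_eq_equiv Hu.
  by rewrite (ltl_sat_until pi1) (ltl_sat_until pi2) Hg Hh -!ltl_sat_shift Hu.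
Qed.

Definition hs_true : hs := HNot (HAnd (HProp 0) (HNot (HProp 0))).
Definition hs_point : hs := HNot (HDia rB hs_true).
Definition hs_first (p : prop_letter) : hs := HDia rB (HAnd hs_point (HProp p)).
Definition hs_last (p : prop_letter) : hs := HDia rE (HAnd hs_point (HProp p)).
Definition hs_iff (f g : hs) : hs := HAnd (HNot (HAnd f (HNot g))) (HNot (HAnd g (HNot f))).

Fixpoint hs_ends_agree (n : nat) : hs :=
  if n is m.+1 then HAnd (hs_ends_agree m) (hs_iff (hs_first m) (hs_last m)) else hs_true.

(* [psi n] only constrains the point interval [0,0], where it demands a later
   state satisfying p_n and agreeing with state 0 on p_0, ..., p_(n-1). *)
Definition psi (n : nat) : hs :=
  HNot (HAnd hs_point (HNot (HDia rBbar (HAnd (hs_last n) (hs_ends_agree n))))).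

Lemma hs_size_psi n : hs_size (psi n) = 48 * n + 27.
Proof.
have size_agree m : hs_size (hs_ends_agree m) = 48 * m + 5 by elim: m => //= m ->; lia.
by rewrite /= size_agree; lia.
Qed.

Section HSSemantics.
Variables (K : kripke) (pi : nat -> kstate K).

Lemma hs_sat_true x y : hs_sat pi hs_true x y.
Proof. by case. Qed.

Lemma hs_sat_point x y : x <= y -> hs_sat pi hs_point x y <-> x = y.
Proof.
move=> le_xy; split=> [no_prefix|->]; last by move=> [w [z [_ [[_ [? ?]] _]]]]; lia.
apply/eqP/negPn/negP => ne_xy; apply: no_prefix.
by exists x, x; split=> //; split; [rewrite /=; lia | exact: hs_sat_true].
Qed.

Lemma hs_sat_first p x y : x < y -> hs_sat pi (hs_first p) x y <-> kmu (pi x) p.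
Proof.
move=> lt_xy; split=> [[w [z [le_wz [[-> [le_xz lt_zy]] [_ Hp]]]]]|Hp].
  by apply: Hp; lia.
exists x, x; split=> //; split; first by rewrite /=; lia.
by split=> [|h ?]; [exact/hs_sat_point | have -> : h = x by lia].
Qed.

Lemma hs_sat_last p x y : x < y -> hs_sat pi (hs_last p) x y <-> kmu (pi y) p.
Proof.
move=> lt_xy; split=> [[w [z [le_wz [[-> [lt_xw le_wy]] [_ Hp]]]]]|Hp].
  by apply: Hp; lia.
exists y, y; split=> //; split; first by rewrite /=; lia.
by split=> [|h ?]; [exact/hs_sat_point | have -> : h = y by lia].
Qed.

Lemma hs_sat_iff f g x y :
  hs_sat pi (hs_iff f g) x y <-> (hs_sat pi f x y <-> hs_sat pi g x y).
Proof. by split=> [[fg gf]|]; [split=> ?; apply: contrapT; tauto | rewrite /=; tauto]. Qed.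

Lemma hs_sat_ends_agree n x y : x < y ->
  hs_sat pi (hs_ends_agree n) x y <-> forall j, j < n -> kmu (pi x) j = kmu (pi y) j.
Proof.
move=> lt_xy; elim: n => [|n IH]; first by split=> // _; exact: hs_sat_true.
rewrite -[hs_sat _ _ _ _]/(hs_sat pi (hs_ends_agree n) x y /\
  hs_sat pi (hs_iff (hs_first n) (hs_last n)) x y).
rewrite IH hs_sat_iff hs_sat_first // hs_sat_last //.
split=> [[agree_n agree_last] j | agree_Sn].
- rewrite ltnS leq_eqVlt => /predU1P[-> | /agree_n //].
  by apply/idP/idP => /agree_last.
- split=> [j lt_jn | ]; first by apply: agree_Sn; lia.
  by rewrite agree_Sn.
Qed.

Lemma hs_sat_psi n :
  (forall i, hs_sat pi (psi n) 0 i) <->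
  exists2 z, 0 < z & kmu (pi z) n /\ forall j, j < n -> kmu (pi 0) j = kmu (pi z) j.
Proof.
split=> [/(_ 0) no_witness | [z z_gt0 [last_n agree]] i [/(hs_sat_point (leq0n i)) <-]].
  have : hs_sat pi (HDia rBbar (HAnd (hs_last n) (hs_ends_agree n))) 0 0.
    by apply: contrapT => ?; apply: no_witness; split=> //; exact/hs_sat_point.
  move=> [_ [z [_ [[-> z_gt0] [/(hs_sat_last _ z_gt0) ? /(hs_sat_ends_agree _ z_gt0) ?]]]]].
  by exists z.
apply; exists 0, z; split=> //; split=> //; split.
  exact/hs_sat_last.
exact/hs_sat_ends_agree.
Qed.

End HSSemantics.

Section Chain.
Variable L : seq (seq bool).

Definition chain_label (i : nat) (p : prop_letter) : bool := nth false (nth [::] L i) p.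

Definition chain_next (x : 'I_(size L).+1) : 'I_(size L).+1 := inord (minn x.+1 (size L)).

(* The path 0 -> 1 -> ... -> size L looping at its end; state i is labelled by
   the i-th entry of L, the final state by nothing. *)
Definition chain : kripke :=
  @Kripke 'I_(size L).+1 (fun x y => y = chain_next x) (fun x => chain_label x) ord0.

Definition chain_path (i : nat) : kstate chain := inord (minn i (size L)).

Lemma val_chain_path i : chain_path i = minn i (size L) :> nat.
Proof. by rewrite inordK // ltnS geq_minr. Qed.

Lemma val_chain_next x : chain_next x = minn x.+1 (size L) :> nat.
Proof. by rewrite inordK // ltnS geq_minr. Qed.

Lemma chain_left_total : left_total chain.
Proof. by move=> x; exists (chain_next x). Qed.

Lemma chain_path_initial : is_initial_path chain_path.
Proof. by split=> [i|]; apply: val_inj; rewrite /= ?val_chain_next !val_chain_path //; lia. Qed.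

Lemma chain_initial_pathE (pi : nat -> kstate chain) : is_initial_path pi -> pi = chain_path.
Proof.
move=> [step init]; apply: funext; elim=> [|i IH]; apply: val_inj.
  by rewrite init /= val_chain_path min0n.
by rewrite step /= IH val_chain_next !val_chain_path; lia.
Qed.

Lemma kmu_chain_path i : kmu (chain_path i) =1 chain_label i.
Proof.
move=> p; rewrite /= val_chain_path /chain_label.
by case: leqP => // /ltnW le_Li; rewrite !nth_default.
Qed.

Lemma chain_ltl_models phi : ltl_models chain phi <-> ltl_sat chain_path phi 0.
Proof. by split=> [|sat pi /chain_initial_pathE ->]; [apply; exact: chain_path_initial|]. Qed.

Lemma chain_hs_lin_models f :
  hs_lin_models chain f <-> forall i, hs_sat chain_path f 0 i.
Proof. by split=> [|sat pi /chain_initial_pathE ->]; [apply; exact: chain_path_initial|]. Qed.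

End Chain.

Section Lasso.
Variable n : nat.

(* A valuation of p_0, ..., p_(n-1) is an n-tuple of booleans; the extra last
   bit is the value of p_n. *)
Definition lasso_seq (a : n.-tuple bool) (S : {set n.-tuple bool}) : seq (seq bool) :=
  rcons a false :: [seq rcons s true | s : n.-tuple bool <- enum S].

Lemma lasso_psi a S : hs_lin_models (chain (lasso_seq a S)) (psi n) <-> a \in S.
Proof.
rewrite chain_hs_lin_models hs_sat_psi.
have label0 j : j < n -> kmu (chain_path (lasso_seq a S) 0) j = nth false a j.
  by move=> lt_jn; rewrite kmu_chain_path /chain_label /= nth_rcons size_tuple lt_jn.
have labelS z j : z < size (enum S) ->
    kmu (chain_path (lasso_seq a S) z.+1) j = nth false (rcons (nth a (enum S) z) true) j.
  by move=> lt_z; rewrite kmu_chain_path /chain_label /= (nth_map a).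
split=> [[[|z] // _ [last_n agree]] | a_in_S].
  have lt_z : z < size (enum S).
    rewrite ltnNge; apply: contraTN last_n => ?.
    by rewrite kmu_chain_path /chain_label /= (nth_default [::]) ?nth_nil ?size_map.
  suff -> : a = nth a (enum S) z by rewrite -mem_enum mem_nth.
  apply/val_inj/(@eq_from_nth _ false) => [|j]; rewrite !size_tuple // => lt_jn.
  by rewrite -label0 // agree // labelS // nth_rcons size_tuple lt_jn.
have lt_a : index a (enum S) < size (enum S) by rewrite index_mem mem_enum.
exists (index a (enum S)).+1 => //.
rewrite labelS // nth_index ?mem_enum // nth_rcons size_tuple ltnn eqxx.
split=> // j lt_jn.
by rewrite label0 // labelS // nth_index ?mem_enum // nth_rcons size_tuple lt_jn.
Qed.

Lemma lasso_truths_shift (a b : n.-tuple bool) S phi :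
  ltl_truths (shift (chain_path (lasso_seq a S))) phi =
  ltl_truths (shift (chain_path (lasso_seq b S))) phi.
Proof.
apply: eq_map => g; apply: asbool_equiv_eq; apply: eq_ltl_sat => i p.
by rewrite /shift !kmu_chain_path.
Qed.

End Lasso.

Lemma ltl_size_ge_exp2 n phi : hs_ltl_equiv (psi n) phi -> 2 ^ n <= ltl_size phi.
Proof.
move=> equiv.
have mem_sat a (S : {set n.-tuple bool}) : a \in S <-> ltl_sat (chain_path (lasso_seq a S)) phi 0.
  by rewrite -lasso_psi (equiv _ (@chain_left_total _)) chain_ltl_models.
pose a0 := nseq_tuple n false.
pose truths S : (ltl_size phi).-tuple bool :=
  Tuple (introT eqP (size_ltl_truths (shift (chain_path (lasso_seq a0 S))) phi)).
have truths_inj : injective truths.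
  move=> S T /(congr1 val) /= eq_truths; apply/setP => a.
  have same_sat : ltl_sat (chain_path (lasso_seq a S)) phi 0 <->
                  ltl_sat (chain_path (lasso_seq a T)) phi 0.
    apply: ltl_sat0_truths => [p|]; first by rewrite !kmu_chain_path.
    by rewrite (lasso_truths_shift a a0) eq_truths; exact: lasso_truths_shift.
  by apply/idP/idP => /mem_sat/same_sat/mem_sat.
have card_sets : #|{: {set n.-tuple bool}}| = 2 ^ 2 ^ n.
  by rewrite -cardsT -powersetT card_powerset cardsT card_tuple card_bool.
by move: (leq_card truths truths_inj); rewrite card_sets card_tuple card_bool leq_exp2l.
Qed.

Lemma leq_expn2r m1 m2 e : m1 <= m2 -> m1 ^ e <= m2 ^ e.
Proof. by case: e => [|e] // le_m; rewrite leq_exp2r. Qed.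

(* Take q := n %/ (k+1) > c (2k+2)^k; then
   c n^k <= c (2k+2)^k q^k < q^(k+1) <= 2^(q(k+1)) <= 2^n. *)
Lemma poly_lt_exp2 c k : exists N, forall n, N <= n -> c * n ^ k < 2 ^ n.
Proof.
pose D := c * (k.+1).*2 ^ k.
exists (D.+1 * k.+1) => n le_Nn.
pose q := n %/ k.+1.
have lt_Dq : D < q by rewrite leq_divRL.
have q_gt0 : 0 < q by apply: leq_ltn_trans lt_Dq.
have le_nq : n <= (k.+1).*2 * q by have := ltn_ceil n (ltn0Sn k); rewrite -/q; nia.
have le_poly : c * n ^ k <= D * q ^ k by rewrite -mulnA -expnMn leq_mul // leq_expn2r.
have lt_pow : D * q ^ k < q ^ k.+1.
  by rewrite expnSr [q ^ k * q]mulnC ltn_pmul2r // expn_gt0 q_gt0.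
have le_exp : q ^ k.+1 <= 2 ^ n.
  rewrite (leq_trans (leq_expn2r _ (ltnW (ltn_expl q (ltnSn 1))))) //.
  by rewrite -expnM leq_pexp2l // leq_divM.
exact: leq_ltn_trans le_poly (leq_trans lt_pow le_exp).
Qed.

Theorem theorem3p5 :
  exists psi : nat -> hs,
    forall c k : nat, exists N : nat, forall n : nat, N <= n ->
      forall phi : ltl, hs_ltl_equiv (psi n) phi ->
        c * hs_size (psi n) ^ k + c < ltl_size phi.
Proof.
exists psi => c k.
have [N HN] := poly_lt_exp2 (c * 75 ^ k + c) k.
exists (maxn N 1) => n; rewrite geq_max => /andP[le_Nn n_gt0] phi equiv.
apply: leq_trans (ltl_size_ge_exp2 equiv); apply: leq_ltn_trans (HN n le_Nn).
rewrite hs_size_psi mulnDl leq_add //.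
  by rewrite -mulnA -expnMn leq_mul // leq_expn2r //; lia.
by rewrite leq_pmulr // expn_gt0 n_gt0.
Qed.
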